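(* Let $I$ be an open interval of real numbers and let $U$ be a subgroup of $\mathrm{Homeo}^+(I)$ such that: (1) the commutator subgroup $[U,U]$ acts freely on $I$ (i.e., every non-identity element of $[U,U]$ has no fixed point in $I$); and (2) each non-identity member of $U$ has at most one fixed point in $I$. Then for every nonempty set $S$ there exists a good $U$-anonymous $S$-predictor on $I$.
   Context: $\mathrm{Homeo}^+(I)$ is the group (under composition) of increasing homeomorphisms of $I$. Write $a=\inf I$ (possibly $-\infty$). For a nonempty set $S$, let ${}^I S$ be the set of total functions $I\to S$, and let $\mathcal{D}$ be the set of all functions $f$ with values in $S$ whose domain is $(a,t_f)$ for some $t_f\in I$. An $S$-predictor on $I$ is any function $\mathcal{P}:\mathcal{D}\to S$. It is good if for every $F\in {}^I S$ the set $\{t\in I : \mathcal{P}(F|_{(a,t)})\neq F(t)\}$ has Lebesgue measure zero. For $f\in\mathcal{D}$ and $\varphi\in\mathrm{Homeo}^+(I)$, $f\circ\varphi$ is the function with domain $(a,\varphi^{-1}(t_f))$. For $U\subseteq \mathrm{Homeo}^+(I)$, $\mathcal{P}$ is $U$-anonymous if $\mathcal{P}(f)=\mathcal{P}(f\circ\varphi)$ for all $f\in\mathcal{D}$ and all $\varphi\in U$. The commutator subgroup $[U,U]$ is the subgroup generated by all elements $\alpha\beta\alpha^{-1}\beta^{-1}$ with $\alpha,\beta\in U$. (The Axiom of Choice is assumed.) *)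

From HB Require Import structures.
From mathcomp Require Import all_boot all_order all_algebra.
From mathcomp Require Import all_classical all_reals all_analysis.
Set Implicit Arguments. Unset Strict Implicit. Unset Printing Implicit Defensive.
Import Order.TTheory GRing.Theory Num.Theory.
Import numFieldNormedType.Exports.
Local Open Scope classical_set_scope.
Local Open Scope ring_scope.

Section Defs.
Variable R : realType.

Definition ointv (a b : \bar R) : set R := [set x : R | (a < x%:E < b)%E].

(* Increasing homeomorphisms of I, represented as maps R -> R that are the
   identity outside I (so composition and equality are those of Homeo^+(I)). *)
Definition homeo_plus (a b : \bar R) (f : R -> R) : Prop :=
  (forall x, ~ ointv a b x -> f x = x) /\
  (forall x, ointv a b x -> ointv a b (f x)) /\
  (forall x y, ointv a b x -> ointv a b y -> x < y -> f x < f y) /\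
  {within ointv a b, continuous f} /\
  exists g : R -> R,
    (forall x, ointv a b x -> ointv a b (g x)) /\
    (forall x, ointv a b x -> g (f x) = x) /\
    (forall y, ointv a b y -> f (g y) = y) /\
    {within ointv a b, continuous g}.

Definition homeo_subgroup (a b : \bar R) (H : set (R -> R)) : Prop :=
  H `<=` homeo_plus a b /\
  H id /\
  (forall f g, H f -> H g -> H (f \o g)) /\
  (forall f, H f -> exists g, H g /\ f \o g = id /\ g \o f = id).

Definition commutators (U : set (R -> R)) : set (R -> R) :=
  [set c | exists alpha beta alphai betai,
     [/\ U alpha, U beta,
         alpha \o alphai = id /\ alphai \o alpha = id,
         beta \o betai = id /\ betai \o beta = id &
         c = alpha \o beta \o alphai \o betai]].

Definition commutator_subgroup (a b : \bar R) (U : set (R -> R)) : set (R -> R) :=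
  [set g | forall H, homeo_subgroup a b H -> commutators U `<=` H -> H g].

(* S-predictors on I: P t h is the prediction for the function h restricted
   to (a, t), t in I; P must depend only on t and h restricted to (a, t). *)
Definition predictor (a b : \bar R) (S : Type) (P : R -> (R -> S) -> S) : Prop :=
  forall t h1 h2, ointv a b t ->
    (forall x, (a < x%:E)%E -> x < t -> h1 x = h2 x) -> P t h1 = P t h2.

Definition good_predictor (a b : \bar R) (S : Type) (P : R -> (R -> S) -> S) : Prop :=
  forall F : R -> S,
    (@lebesgue_measure R).-negligible [set t | ointv a b t /\ P t F <> F t].

(* P(f) = P(f o phi), where f o phi has domain (a, phi^-1(t_f)). *)
Definition anonymous (a b : \bar R) (U : set (R -> R)) (S : Type)
    (P : R -> (R -> S) -> S) : Prop :=
  forall phi t s (h : R -> S), U phi -> ointv a b t -> ointv a b s -> phi s = t ->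
    P t h = P s (h \o phi).

End Defs.

From HB Require Import structures.
From mathcomp Require Import all_boot all_order all_algebra.
From mathcomp Require Import all_classical all_reals all_analysis.
From mathcomp Require Import wochoice.
Set Implicit Arguments. Unset Strict Implicit. Unset Printing Implicit Defensive.
Import Order.TTheory GRing.Theory Num.Theory.
Import numFieldNormedType.Exports.
Local Open Scope classical_set_scope.
Local Open Scope ring_scope.

(* By Hölder's theorem the freely acting group [U,U] is abelian: freeness and the
   intermediate value theorem make "g x < h x" independent of x, giving an
   archimedean total order on [U,U].

   Well-order all functions R -> S and let G be the least one such that G \o phi
   extends the observed h on (a, t) for some phi in U; predict the value that G
   eventually takes on the points phi t as they decrease. A wrong guess at t forces either a change of G just after t
   (countably many t: by well-foundedness each is followed by an interval free of
   others) or, for the representative G \o phi_q attached to a rational q just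
   above t, a break point: some rho in U with rho t < t such that
   G \o phi_q \o rho = G \o phi_q on (a, t) but not at t. The intervals
   (rho t, t) of distinct break points are disjoint, because a commutator of two
   overlapping witnesses would break below both, and in the abelian free group
   [U,U] such a break is unique and fixed by the witnesses. *)

Section OpenInterval.
Variables (R : realType) (a b : \bar R).
Local Notation I := (ointv a b).

Lemma ointv_convex x y z : I x -> I y -> x <= z -> z <= y -> I z.
Proof.
rewrite /ointv /= => /andP[ax _] /andP[_ yb] xz zy; apply/andP; split.
- by apply: (lt_le_trans ax); rewrite lee_fin.
- by apply: (le_lt_trans _ yb); rewrite lee_fin.
Qed.

Lemma ointv_fixpoint f u v : {within I, continuous f} -> I u -> I v -> u <= v ->
  Num.min (f u - u) (f v - v) <= 0 <= Num.max (f u - u) (f v - v) ->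
  exists2 c, I c & f c = c.
Proof.
move=> fC Iu Iv uv sign.
have uvI : `[u, v] `<=` I.
  by move=> z /=; rewrite in_itv /= => /andP[uz zv]; exact: ointv_convex Iu Iv uz zv.
have idC : {within `[u, v], continuous (@id R)}.
  by apply: continuous_subspaceT => ?; exact: cvg_id.
have dC : {within `[u, v], continuous (fun z => f z - z)}.
  by move=> z; apply: continuousB; [exact: (continuous_subspaceW uvI fC) | exact: idC].
have [c cuv /eqP] := IVT uv dC sign; rewrite subr_eq0 => /eqP fc.
by exists c => //; apply: uvI.
Qed.

Section FixpointFree.
Variable f : R -> R.
Hypothesis fC : {within I, continuous f}.
Hypothesis f_nofix : forall c, I c -> f c <> c.

Lemma fixpoint_free_sides x y : I x -> I y -> f x < x -> y < f y -> False.
Proof.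
move=> Ix Iy fx fy; have [xy|yx] := leP x y.
- have [|c Ic] := ointv_fixpoint fC Ix Iy xy; last exact: f_nofix.
  by rewrite ge_min le_max !subr_le0 !subr_ge0 (ltW fx) (ltW fy) orbT.
- have [|c Ic] := ointv_fixpoint fC Iy Ix (ltW yx); last exact: f_nofix.
  by rewrite ge_min le_max !subr_le0 !subr_ge0 (ltW fx) (ltW fy) orbT.
Qed.

Lemma fixpoint_free_lt x y : I x -> I y -> f x < x -> f y < y.
Proof.
move=> Ix Iy fx; case: (ltgtP (f y) y) => // [fy|fy]; exfalso.
- exact: fixpoint_free_sides Ix Iy fx fy.
- exact: f_nofix fy.
Qed.

Lemma fixpoint_free_gt x y : I x -> I y -> x < f x -> y < f y.
Proof.
move=> Ix Iy fx; case: (ltgtP (f y) y) => // [fy|fy]; exfalso.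
- exact: fixpoint_free_sides Iy Ix fy fx.
- exact: f_nofix fy.
Qed.

End FixpointFree.

End OpenInterval.

Section Inverse.
Variable T : Type.

Definition finv (f : T -> T) : T -> T :=
  if pselect (exists g, f \o g = id /\ g \o f = id) is left P then sval (cid P)
  else id.

Lemma comp_id_cancel (f g : T -> T) : f \o g = id -> cancel g f.
Proof. by move=> e x; exact: (congr1 (fun k => k x) e). Qed.

Lemma finv_eq f g : f \o g = id -> g \o f = id -> finv f = g.
Proof.
move=> fg gf; rewrite /finv; case: pselect => [P|[]]; last by exists g.
case: (cid P) => h [fh _] /=; apply/funext => x.
by rewrite -[h x](comp_id_cancel gf) (comp_id_cancel fh).
Qed.

End Inverse.

Section HomeoSubgroup.
Variables (R : realType) (a b : \bar R) (H : set (R -> R)).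
Hypothesis HH : homeo_subgroup a b H.
Local Notation I := (ointv a b).

Lemma sg_homeo f : H f -> homeo_plus a b f.
Proof. by case: HH => sub _; apply: sub. Qed.

Lemma sg_id : H id.
Proof. by case: HH => _ []. Qed.

Lemma sg_comp f g : H f -> H g -> H (f \o g).
Proof. by case: HH => _ [_ [comp _]]; apply: comp. Qed.

Lemma sg_finv_spec f : H f -> [/\ H (finv f), f \o finv f = id & finv f \o f = id].
Proof.
case: HH => _ [_ [_ inv]] /inv[g [Hg [fg gf]]].
by rewrite (finv_eq fg gf).
Qed.

Lemma sg_finv f : H f -> H (finv f).
Proof. by case/sg_finv_spec. Qed.

Lemma sg_finvK f : H f -> cancel f (finv f).
Proof. by case/sg_finv_spec => _ _ /comp_id_cancel. Qed.

Lemma sg_finvKV f : H f -> cancel (finv f) f.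
Proof. by case/sg_finv_spec => _ /comp_id_cancel. Qed.

Lemma sg_finv_involutive f : H f -> finv (finv f) = f.
Proof. by case/sg_finv_spec => _ fg gf; exact: finv_eq. Qed.

Lemma sg_iter n f : H f -> H (iter n f).
Proof. by move=> Hf; elim: n => [|n IH]; [exact: sg_id | exact: sg_comp]. Qed.

Lemma sg_ointv f x : H f -> I x -> I (f x).
Proof. by move=> /sg_homeo[_ [fI _]]; apply: fI. Qed.

Lemma sg_ltE f x y : H f -> I x -> I y -> (f x < f y) = (x < y).
Proof.
move=> /sg_homeo[_ [_ [mono _]]] Ix Iy.
case: (ltgtP x y) => [xy|yx|->]; last by rewrite ltxx.
- exact: mono.
- by apply/negbTE; rewrite -leNgt ltW // mono.
Qed.

Lemma sg_leE f x y : H f -> I x -> I y -> (f x <= f y) = (x <= y).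
Proof. by move=> Hf Ix Iy; rewrite !leNgt sg_ltE. Qed.

Lemma sg_cont f : H f -> {within I, continuous f}.
Proof. by move=> /sg_homeo[_ [_ [_ []]]]. Qed.

Lemma sg_commute_finv f g : H f -> f \o g = g \o f -> finv f \o g = g \o finv f.
Proof.
move=> Hf fg; apply/funext => x /=.
have fgx y : f (g y) = g (f y) := congr1 (fun k => k y) fg.
by rewrite -[in LHS](sg_finvKV Hf x) -fgx sg_finvK.
Qed.

Lemma sg_commutators : commutators H `<=` H.
Proof.
move=> _ [al [be [ali [bei [Hal Hbe [al1 al2] [be1 be2] ->]]]]].
rewrite -(finv_eq al1 al2) -(finv_eq be1 be2).
by do 2![apply: sg_comp; last exact: sg_finv]; exact: sg_comp.
Qed.

Lemma sg_commutator f g : H f -> H g -> commutators H (f \o g \o finv f \o finv g).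
Proof.
move=> Hf Hg; have [[_ f1 f2] [_ g1 g2]] := (sg_finv_spec Hf, sg_finv_spec Hg).
by exists f, g, (finv f), (finv g).
Qed.

Lemma commutators_finv k : commutators H k -> commutators H (finv k).
Proof.
move=> [al [be [ali [bei [Hal Hbe [al1 al2] [be1 be2] ->]]]]].
exists be, al, bei, ali; split => //.
by apply: finv_eq; apply/funext => x /=; rewrite ?(comp_id_cancel al1,
  comp_id_cancel al2, comp_id_cancel be1, comp_id_cancel be2).
Qed.

Lemma commutators_conj s k :
  H s -> commutators H k -> commutators H (s \o k \o finv s).
Proof.
move=> Hs [al [be [ali [bei [Hal Hbe [al1 al2] [be1 be2] ->]]]]].
exists (s \o al \o finv s), (s \o be \o finv s), (s \o ali \o finv s),
       (s \o bei \o finv s); split.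
- by apply: sg_comp; [exact: sg_comp | exact: sg_finv].
- by apply: sg_comp; [exact: sg_comp | exact: sg_finv].
- by split; apply/funext => x /=;
    rewrite sg_finvK // ?(comp_id_cancel al1) ?(comp_id_cancel al2) sg_finvKV.
- by split; apply/funext => x /=;
    rewrite sg_finvK // ?(comp_id_cancel be1) ?(comp_id_cancel be2) sg_finvKV.
- by apply/funext => x /=; rewrite !sg_finvK.
Qed.

End HomeoSubgroup.

Section CommutatorSubgroup.
Variables (R : realType) (a b : \bar R) (U : set (R -> R)).
Hypothesis HU : homeo_subgroup a b U.
Local Notation G := (commutator_subgroup a b U).

Lemma commutators_sub : commutators U `<=` G.
Proof. by move=> c cc K _ sub; exact: sub. Qed.

Lemma commutator_subgroup_sub : G `<=` U.
Proof. by move=> g Gg; exact: Gg HU (sg_commutators HU). Qed.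

Lemma homeo_subgroup_commutator : homeo_subgroup a b G.
Proof.
split; [|split; [|split]].
- by move=> g /commutator_subgroup_sub; exact: sg_homeo.
- by move=> K HK _; exact: sg_id HK.
- by move=> f g Gf Gg K HK sub; apply: (sg_comp HK); [exact: Gf | exact: Gg].
move=> f Gf; have [_ fg gf] := sg_finv_spec HU (commutator_subgroup_sub Gf).
exists (finv f); split => // K HK sub.
by have := sg_finv HK (Gf K HK sub).
Qed.

End CommutatorSubgroup.

Definition lt_on (R : realType) (a b : \bar R) (f g : R -> R) :=
  forall x, ointv a b x -> f x < g x.
Definition le_on (R : realType) (a b : \bar R) (f g : R -> R) :=
  forall x, ointv a b x -> f x <= g x.

Lemma sg_iter_unbounded (R : realType) (a b : \bar R) (H : set (R -> R)) h x y :
  homeo_subgroup a b H -> H h -> lt_on a b id h -> ointv a b x -> ointv a b y ->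
  exists k, y < iter k h x.
Proof.
move=> HH Hh hpos Ix Iy; apply: contrapT => nk.
have ub k : iter k h x <= y by rewrite leNgt; apply/negP => yk; apply: nk; exists k.
set orbit := range (fun k => iter k h x).
have orbit_sup : has_sup orbit by split; [exists x, 0%N | exists y => _ [k _ <-]].
set l := sup orbit.
have Il : ointv a b l.
  apply: ointv_convex Ix Iy _ _; first by apply: sup_upper_bound => //; exists 0%N.
  by apply: ge_sup => [|_ [k _ <-]]; [exists x, 0%N | exact: ub].
have Ihl : ointv a b (finv h l) := sg_ointv HH (sg_finv HH Hh) Il.
have gap : 0 < l - finv h l.
  by rewrite subr_gt0; have := hpos _ Ihl; rewrite /= (sg_finvKV HH Hh).
have [_ [k _ <-]] := sup_adherent gap orbit_sup.
rewrite subKr -(sg_ltE HH Hh Ihl (sg_ointv HH (sg_iter HH k Hh) Ix)) (sg_finvKV HH Hh).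
by rewrite ltNge -iterS sup_upper_bound //; exists k.+1.
Qed.

Section Holder.
Variables (R : realType) (a b : \bar R) (H : set (R -> R)).
Hypothesis HH : homeo_subgroup a b H.
Hypothesis H_free : forall g, H g -> g <> id -> forall x, ointv a b x -> g x <> x.
Variable x0 : R.
Hypothesis Ix0 : ointv a b x0.
Local Notation I := (ointv a b).
Local Notation lt_on := (lt_on a b).
Local Notation le_on := (le_on a b).

Lemma free_trichotomy f g : H f -> H g -> f = g \/ lt_on f g \/ lt_on g f.
Proof.
move=> Hf Hg; set d := finv g \o f.
have Hd : H d := sg_comp HH (sg_finv HH Hg) Hf.
have fgd : f = g \o d by apply/funext => x; rewrite /d /= (sg_finvKV HH Hg).
have [dE|dN] := pselect (d = id); first by left; rewrite fgd dE.
have dC := sg_cont HH Hd; have d_nofix := H_free Hd dN.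
right; case: (ltgtP (d x0) x0) => [dx0|dx0|dx0]; last by case: (d_nofix x0).
- left => x Ix; rewrite fgd /= (sg_ltE HH Hg (sg_ointv HH Hd Ix) Ix).
  exact: (fixpoint_free_lt dC d_nofix Ix0 Ix dx0).
- right => x Ix; rewrite fgd /= (sg_ltE HH Hg Ix (sg_ointv HH Hd Ix)).
  exact: (fixpoint_free_gt dC d_nofix Ix0 Ix dx0).
Qed.

Lemma free_lt_on f g x : H f -> H g -> I x -> f x < g x -> lt_on f g.
Proof.
move=> Hf Hg Ix fgx; case: (free_trichotomy Hf Hg) => [fg|[//|gf]].
- by move: fgx; rewrite fg ltxx.
- by move: (gf x Ix); rewrite ltNge (ltW fgx).
Qed.

Lemma free_bracket h f : H h -> lt_on id h -> H f -> lt_on id f ->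
  exists m, le_on (iter m h) f /\ lt_on f (iter m.+1 h).
Proof.
move=> Hh hpos Hf fpos.
have [k hk] := sg_iter_unbounded HH Hh hpos Ix0 (sg_ointv HH Hf Ix0).
have below : exists k, `[< lt_on f (iter k h) >].
  by exists k; apply/asboolP; exact: free_lt_on Hf (sg_iter HH k Hh) Ix0 hk.
case: (ex_minnP below) => -[|m] /asboolP fm minm.
  by have := lt_trans (fpos x0 Ix0) (fm x0 Ix0); rewrite ltxx.
exists m; split=> //.
case: (free_trichotomy (sg_iter HH m Hh) Hf) => [->|[mf|fm']] x Ix //.
- exact: ltW (mf x Ix).
- by have := minm m (asboolT fm'); rewrite ltnn.
Qed.

(* Hölder's dichotomy: either the positive cone has a least element, whose
   powers exhaust it, or it is dense. *)
Definition min_pos e := [/\ H e, lt_on id e & forall h, H h -> lt_on id h -> le_on e h].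

Lemma min_pos_iter e p : min_pos e -> H p -> lt_on id p -> exists m, p = iter m e.
Proof.
move=> [He epos emin] Hp ppos; have [m [mp pm]] := free_bracket He epos Hp ppos.
have Hm := sg_iter HH m He.
set r := finv (iter m e) \o p.
have Hr : H r := sg_comp HH (sg_finv HH Hm) Hp.
have pr : p = iter m e \o r by apply/funext => x; rewrite /r /= (sg_finvKV HH Hm).
have Ir := sg_ointv HH Hr Ix0.
case: (free_trichotomy Hr (sg_id HH)) => [rE|[r_lt|r_gt]].
- by exists m; rewrite pr rE.
- by have := mp x0 Ix0; rewrite pr /= (sg_leE HH Hm Ix0 Ir) leNgt r_lt.
- have := pm x0 Ix0; rewrite iterSr pr /= (sg_ltE HH Hm Ir (sg_ointv HH He Ix0)).
  by rewrite ltNge (emin r Hr r_gt).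
Qed.

Lemma min_pos_comm e f g : min_pos e -> H f -> H g -> lt_on id f -> lt_on id g ->
  f \o g = g \o f.
Proof.
move=> me Hf Hg fpos gpos.
have [[m ->] [n ->]] := (min_pos_iter me Hf fpos, min_pos_iter me Hg gpos).
by apply/funext => x /=; rewrite -!iterD addnC.
Qed.

Lemma no_min_pos_half c : ~ (exists e, min_pos e) -> H c -> lt_on id c ->
  exists h, [/\ H h, lt_on id h & le_on (h \o h) c].
Proof.
move=> nomin Hc cpos.
have [g [Hg gpos gc]] : exists g, [/\ H g, lt_on id g & lt_on g c].
  apply: contrapT => nog; apply: nomin; exists c; split => // h Hh hpos.
  case: (free_trichotomy Hc Hh) => [->|[ch|hc]] x Ix //; first exact: ltW (ch x Ix).
  by exfalso; apply: nog; exists h.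
case: (free_trichotomy (sg_comp HH Hg Hg) Hc) => [ggc|[ggc|cgg]].
- by exists g; split => // x Ix; rewrite ggc.
- by exists g; split => // x Ix; exact: ltW (ggc x Ix).
have Hginv := sg_finv HH Hg.
exists (finv g \o c); split; first exact: (sg_comp HH Hginv Hc).
- move=> x Ix; have Icx := sg_ointv HH Hc Ix.
  rewrite /= -(sg_ltE HH Hg Ix (sg_ointv HH Hginv Icx)) (sg_finvKV HH Hg).
  exact: gc.
- move=> x Ix /=; set y := finv g (c x).
  have Iy : I y := sg_ointv HH Hginv (sg_ointv HH Hc Ix).
  have cx : c x = g y by rewrite /y (sg_finvKV HH Hg).
  have Icy := sg_ointv HH Hc Iy.
  rewrite cx -(sg_leE HH Hg (sg_ointv HH Hginv Icy) (sg_ointv HH Hg Iy)).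
  by rewrite (sg_finvKV HH Hg); exact: ltW (cgg y Iy).
Qed.

(* With c := (g f)^-1 (f g) > id and h > id such that h h <= c, bracketing f and
   g between powers of h gives f g < h^(m+n+2) <= g f c = f g. *)
Lemma no_min_pos_not_lt f g : ~ (exists e, min_pos e) -> H f -> H g ->
  lt_on id f -> lt_on id g -> ~ lt_on (g \o f) (f \o g).
Proof.
move=> nomin Hf Hg fpos gpos gf_fg.
have Hgf := sg_comp HH Hg Hf.
set c := finv (g \o f) \o (f \o g).
have Hc : H c := sg_comp HH (sg_finv HH Hgf) (sg_comp HH Hf Hg).
have fgE x : f (g x) = g (f (c x)) := esym (sg_finvKV HH Hgf (f (g x))).
have cpos : lt_on id c.
  move=> x Ix; have Icx := sg_ointv HH Hc Ix.
  by rewrite /= -(sg_ltE HH Hgf Ix Icx) /= -fgE; exact: gf_fg.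
have [h [Hh hpos hhc]] := no_min_pos_half nomin Hc cpos.
have [m [mf fm]] := free_bracket Hh hpos Hf fpos.
have [n [ng gn]] := free_bracket Hh hpos Hg gpos.
have Hiter k := sg_iter HH k Hh.
have Ih k x : I x -> I (iter k h x) := sg_ointv HH (Hiter k).
have Icx0 := sg_ointv HH Hc Ix0.
have upper : f (g x0) < iter (m.+1 + n.+1) h x0.
  rewrite iterD; apply: lt_trans (fm _ (sg_ointv HH Hg Ix0)) _.
  by rewrite (sg_ltE HH (Hiter _) (sg_ointv HH Hg Ix0) (Ih _ _ Ix0)); exact: gn.
have lower : iter (m.+1 + n.+1) h x0 <= g (f (c x0)).
  have -> : (m.+1 + n.+1 = n + (m + 2))%N by rewrite addnC addSn addn2 !addnS.
  rewrite !iterD; apply: le_trans (ng _ (sg_ointv HH Hf Icx0)).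
  rewrite (sg_leE HH (Hiter _) (Ih _ _ (Ih _ _ Ix0)) (sg_ointv HH Hf Icx0)).
  apply: le_trans (mf _ Icx0).
  by rewrite (sg_leE HH (Hiter _) (Ih _ _ Ix0) Icx0); exact: hhc.
by move: upper; rewrite fgE ltNge lower.
Qed.

Lemma free_pos_comm f g : H f -> H g -> lt_on id f -> lt_on id g -> f \o g = g \o f.
Proof.
move=> Hf Hg fpos gpos.
have [[e me]|nomin] := pselect (exists e, min_pos e).
  exact: min_pos_comm me Hf Hg fpos gpos.
case: (free_trichotomy (sg_comp HH Hf Hg) (sg_comp HH Hg Hf)) => [//|[fg_gf|gf_fg]].
- by case: (no_min_pos_not_lt nomin Hg Hf gpos fpos fg_gf).
- by case: (no_min_pos_not_lt nomin Hf Hg fpos gpos gf_fg).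
Qed.

Lemma free_pos_or f : H f -> f = id \/ lt_on id f \/ lt_on id (finv f).
Proof.
move=> Hf; case: (free_trichotomy Hf (sg_id HH)) => [->|[f_lt|]];
  [by left| |by right; left].
right; right => x Ix; have Ifx := sg_ointv HH (sg_finv HH Hf) Ix.
by have := f_lt _ Ifx; rewrite /= (sg_finvKV HH Hf).
Qed.

Lemma free_comm_nonempty f g : H f -> H g -> f \o g = g \o f.
Proof.
have comm_pos_r f' g' : H f' -> H g' -> lt_on id g' -> f' \o g' = g' \o f'.
  move=> Hf Hg gpos; case: (free_pos_or Hf) => [->|[fpos|fipos]] //.
  - exact: free_pos_comm.
  - rewrite -(sg_finv_involutive HH Hf); apply: (sg_commute_finv HH (sg_finv HH Hf)).
    exact: (free_pos_comm (sg_finv HH Hf) Hg fipos gpos).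
move=> Hf Hg; case: (free_pos_or Hg) => [->|[gpos|gipos]] //.
- exact: comm_pos_r.
- rewrite -(sg_finv_involutive HH Hg); apply/esym/(sg_commute_finv HH (sg_finv HH Hg)).
  exact/esym/(comm_pos_r _ _ Hf (sg_finv HH Hg) gipos).
Qed.

End Holder.

Theorem free_homeo_subgroup_comm (R : realType) (a b : \bar R) (H : set (R -> R)) :
  homeo_subgroup a b H ->
  (forall g, H g -> g <> id -> forall x, ointv a b x -> g x <> x) ->
  forall f g, H f -> H g -> f \o g = g \o f.
Proof.
move=> HH H_free f g Hf Hg.
have [[x0 Ix0]|noI] := pselect (exists x, ointv a b x).
  exact: (free_comm_nonempty HH H_free Ix0 Hf Hg).
have idE k : H k -> k = id.
  move=> /(sg_homeo HH)[outside _]; apply/funext => x.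
  by apply: outside => Ix; apply: noI; exists x.
by rewrite (idE f Hf) (idE g Hg).
Qed.

Section Breaks.
Variables (R : realType) (a b : \bar R) (U : set (R -> R)).
Hypothesis HU : homeo_subgroup a b U.
Hypothesis comm_free : forall g, commutator_subgroup a b U g -> g <> id ->
  forall x, ointv a b x -> g x <> x.
Variables (S : Type) (F : R -> S).
Local Notation I := (ointv a b).

Definition agrees_below k t := forall x, I x -> x < t -> F (k x) = F x.
Definition break_at k t := agrees_below k t /\ F (k t) <> F t.
Definition comm_break k t := [/\ commutators U k, I t, k t < t & break_at k t].

Lemma break_at_neq_id k t : break_at k t -> k <> id.
Proof. by move=> [_ neq] kE; apply: neq; rewrite kE. Qed.

Lemma break_at_finv k t : U k -> I t -> break_at k t -> break_at (finv k) (k t).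
Proof.
move=> Uk It [agree neq]; split; last by rewrite (sg_finvK HU Uk) => /esym.
move=> x Ix x_lt; have Iz := sg_ointv HU (sg_finv HU Uk) Ix.
have z_lt : finv k x < t by rewrite -(sg_ltE HU Uk Iz It) (sg_finvKV HU Uk).
by rewrite -(agree _ Iz z_lt) (sg_finvKV HU Uk).
Qed.

Lemma comm_break_uniq k1 k2 t1 t2 : comm_break k1 t1 -> comm_break k2 t2 -> t1 = t2.
Proof.
wlog t12 : k1 k2 t1 t2 / t1 < t2.
  move=> W b1 b2; case: (ltgtP t1 t2) => // t12.
  - exact: (W _ _ _ _ t12 b1 b2).
  - exact/esym/(W _ _ _ _ t12 b2 b1).
move=> [c1 It1 k1t1 [agree1 neq1]] [c2 It2 k2t2 b2].
have [Uk1 Uk2] := (sg_commutators HU c1, sg_commutators HU c2).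
have k2t1 : k2 t1 < t1.
  have k2_nofix := comm_free (commutators_sub c2) (break_at_neq_id b2).
  exact: (fixpoint_free_lt (sg_cont HU Uk2) k2_nofix It2 It1 k2t2).
have k12 : k2 \o k1 = k1 \o k2.
  exact: (free_homeo_subgroup_comm (homeo_subgroup_commutator HU) comm_free
    (commutators_sub c2) (commutators_sub c1)).
case: neq1; rewrite -(b2.1 _ (sg_ointv HU Uk1 It1) (lt_trans k1t1 t12)).
have -> : k2 (k1 t1) = k1 (k2 t1) := congr1 (fun h => h t1) k12.
by rewrite (agree1 _ (sg_ointv HU Uk2 It1) k2t1) (b2.1 _ It1 t12).
Qed.

Lemma comm_break_conj k t s T : comm_break k t -> U s -> I T -> t < T ->
  agrees_below s T -> comm_break (s \o k \o finv s) (s t).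
Proof.
move=> [ck It kt [agree neq]] Us IT tT sT.
have Uk := sg_commutators HU ck; have Ikt := sg_ointv HU Uk It.
have conjK x : (s \o k \o finv s) (s x) = s (k x) by rewrite /= (sg_finvK HU Us).
split.
- exact: (commutators_conj HU Us ck).
- exact: (sg_ointv HU Us It).
- by rewrite conjK (sg_ltE HU Us Ikt It).
split; last by rewrite conjK (sT _ Ikt (lt_trans kt tT)) (sT _ It tT).
move=> x Ix x_lt; set w := finv s x.
have Iw : I w := sg_ointv HU (sg_finv HU Us) Ix.
have w_lt : w < t by rewrite -(sg_ltE HU Us Iw It) (sg_finvKV HU Us).
have Ikw := sg_ointv HU Uk Iw.
have kw_lt : k w < T.
  by apply: lt_trans (lt_trans kt tT); rewrite (sg_ltE HU Uk Iw It).
rewrite /= -/w (sT _ Ikw kw_lt) (agree _ Iw w_lt).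
by rewrite -[in RHS](sg_finvKV HU Us x) -/w (sT _ Iw (lt_trans w_lt tT)).
Qed.

Lemma comm_break_of_break k y : commutators U k -> I y -> break_at k y ->
  comm_break k y \/ comm_break (finv k) (k y).
Proof.
move=> ck Iy bk; have Uk := sg_commutators HU ck.
have k_nofix := comm_free (commutators_sub ck) (break_at_neq_id bk).
case: (ltgtP (k y) y) => [ky|ky|ky]; last by case: (k_nofix y Iy).
- by left.
- right; split.
  + exact: (commutators_finv ck).
  + exact: (sg_ointv HU Uk Iy).
  + by rewrite (sg_finvK HU Uk).
  + exact: break_at_finv.
Qed.

Lemma break_at_commutator r1 r2 t1 t2 : I t1 -> t1 < t2 -> U r1 -> U r2 ->
  r1 t1 < t1 -> r2 t1 < t1 -> break_at r1 t1 -> agrees_below r2 t2 ->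
  break_at (r2 \o r1 \o finv r2 \o finv r1) (r1 (r2 t1)).
Proof.
move=> It1 t12 Ur1 Ur2 r1t1 r2t1 [agree1 neq1] agree2.
have [Ui1 Ui2] := (sg_finv HU Ur1, sg_finv HU Ur2).
have Ir2t1 := sg_ointv HU Ur2 It1; have Ir1t1 := sg_ointv HU Ur1 It1.
split; last first.
  rewrite /= (sg_finvK HU Ur1) (sg_finvK HU Ur2) (agree2 _ Ir1t1 (lt_trans r1t1 t12)).
  by rewrite (agree1 _ Ir2t1 r2t1) (agree2 _ It1 t12).
move=> x Ix x_lt /=; set u := finv r1 x; set v := finv r2 u.
have Iu : I u := sg_ointv HU Ui1 Ix.
have u_lt : u < r2 t1 by rewrite -(sg_ltE HU Ur1 Iu Ir2t1) (sg_finvKV HU Ur1).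
have Iv : I v := sg_ointv HU Ui2 Iu.
have v_lt : v < t1 by rewrite -(sg_ltE HU Ur2 Iv It1) (sg_finvKV HU Ur2).
have r1v_lt : r1 v < t2.
  by apply: lt_trans (lt_trans r1t1 t12); rewrite (sg_ltE HU Ur1 Iv It1).
rewrite (agree2 _ (sg_ointv HU Ur1 Iv) r1v_lt) (agree1 _ Iv v_lt).
rewrite -(agree2 _ Iv (lt_trans v_lt t12)) (sg_finvKV HU Ur2).
by rewrite -(agree1 _ Iu (lt_trans u_lt r2t1)) (sg_finvKV HU Ur1).
Qed.

(* If the intervals (r1 t1, t1) and (r2 t2, t2) overlapped, the commutator
   [r2, r1] would break below t1; conjugating the (unique) commutator break by
   r1 and r2 shows that both fix it, hence so does [r2, r1], against freeness. *)
Lemma break_points_separated t1 t2 r1 r2 : I t1 -> I t2 -> t1 < t2 -> U r1 -> U r2 ->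
  r1 t1 < t1 -> break_at r1 t1 -> break_at r2 t2 -> r2 t2 < t1 -> False.
Proof.
move=> It1 It2 t12 Ur1 Ur2 r1t1 b1 b2 r2t2.
have r2t1 : r2 t1 < t1.
  by apply: lt_trans r2t2; rewrite (sg_ltE HU Ur2 It1 It2).
set k := r2 \o r1 \o finv r2 \o finv r1.
have ck : commutators U k := sg_commutator HU Ur2 Ur1.
have bk := break_at_commutator It1 t12 Ur1 Ur2 r1t1 r2t1 b1 b2.1.
have Iy := sg_ointv HU Ur1 (sg_ointv HU Ur2 It1).
have y_lt : r1 (r2 t1) < t1.
  by apply: lt_trans r1t1; rewrite (sg_ltE HU Ur1 (sg_ointv HU Ur2 It1) It1).
have ky_lt : k (r1 (r2 t1)) < t1.
  rewrite /k /= (sg_finvK HU Ur1) (sg_finvK HU Ur2); apply: lt_trans r2t1.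
  by rewrite (sg_ltE HU Ur2 (sg_ointv HU Ur1 It1) It1).
have [t0 [k0 [cb0 t0_lt]]] : exists t0 k0, comm_break k0 t0 /\ t0 < t1.
  case: (comm_break_of_break ck Iy bk) => cb; first by exists (r1 (r2 t1)), k.
  by exists (k (r1 (r2 t1))), (finv k).
have [_ It0 _ _] := cb0.
have fixed r T : U r -> I T -> t0 < T -> agrees_below r T -> finv r t0 = t0 /\ r t0 = t0.
  move=> Ur IT t0T agree.
  have e := comm_break_uniq (comm_break_conj cb0 Ur IT t0T agree) cb0.
  by split; [rewrite -{1}e (sg_finvK HU Ur) | ].
have [ei1 e1] := fixed r1 t1 Ur1 It1 t0_lt b1.1.
have [ei2 e2] := fixed r2 t2 Ur2 It2 (lt_trans t0_lt t12) b2.1.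
apply: (comm_free (commutators_sub ck) (break_at_neq_id bk) It0).
by rewrite /k /= ei1 ei2 e1 e2.
Qed.

Definition break_points := [set t | I t /\ exists r, [/\ U r, r t < t & break_at r t]].

Lemma break_points_countable : countable break_points.
Proof.
have [rho rhoP] : {rho : R -> R -> R & forall t,
    rho t t < t /\ (break_points t -> U (rho t) /\ break_at (rho t) t)}.
  apply: (@choice _ _ (fun t r => r t < t /\ (break_points t -> U r /\ break_at r t))).
  move=> t; case: (pselect (break_points t)) => [[_ [r [Ur rt br]]]|nB].
    by exists r.
  by exists (fun x => x - 1); split => //; rewrite ltrBlDr ltrDl ltr01.
apply: (@separated_open_countable R R (fun t => `]rho t t, t[%classic)).
- by move=> t; exact: itv_open.
- move=> t; exists ((rho t t + t) / 2) => /=.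
  by rewrite in_itv /= !midf_lt //; exact: (rhoP t).1.
move=> i j Bi Bj [z [/=]]; rewrite !in_itv /= => /andP[zi1 zi2] /andP[zj1 zj2].
have [[Ui bi] [Uj bj]] := ((rhoP i).2 Bi, (rhoP j).2 Bj).
have [[Ii _] [Ij _]] := (Bi, Bj).
case: (ltgtP i j) => // ij; exfalso.
- exact: (break_points_separated Ii Ij ij Ui Uj (rhoP i).1 bi bj (lt_trans zj1 zi2)).
- exact: (break_points_separated Ij Ii ij Uj Ui (rhoP j).1 bj bi (lt_trans zi1 zj2)).
Qed.

End Breaks.

Section WellOrderedChoice.
Variable T : Type.

Definition wo : rel {classic T} := sval (well_ordering_principle {classic T}).

Lemma wo_well_order : well_order wo.
Proof. exact: svalP (well_ordering_principle {classic T}). Qed.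

Lemma wo_anti (x y : T) : wo x y -> wo y x -> x = y.
Proof.
move=> xy yx; apply: (@wo_chain_antisymmetric _ wo predT (withinW wo_well_order)) => //.
by rewrite xy yx.
Qed.

Definition wo_min (d : T) (A : set T) : T :=
  if pselect (exists z, A z /\ forall x, A x -> wo z x) is left P then sval (cid P)
  else d.

Lemma wo_minP d A : A !=set0 -> A (wo_min d A) /\ forall x, A x -> wo (wo_min d A) x.
Proof.
move=> [x Ax]; rewrite /wo_min; case: pselect => [P|[]]; first exact: svalP (cid P).
have neA : nonempty [pred y : {classic T} | `[< A y >]].
  by exists x; rewrite inE.
have [z [[Az lb] _]] := wo_well_order neA.
exists z; split=> [|y Ay]; first by move: Az; rewrite inE.
by apply: lb; rewrite inE.
Qed.

End WellOrderedChoice.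

Lemma countable_negligible (R : realType) (A : set R) :
  countable A -> (@lebesgue_measure R).-negligible A.
Proof.
move=> cA; apply/negligibleP; last exact: countable_lebesgue_measure0.
by apply: countable_measurable cA => t; exact: measurable_set1.
Qed.

Section Predictor.
Variables (R : realType) (a b : \bar R) (U : set (R -> R)).
Hypothesis HU : homeo_subgroup a b U.
Variables (S : Type) (s0 : S).
Local Notation I := (ointv a b).

Definition matches (G : R -> S) t (h : R -> S) phi :=
  forall x, I x -> x < t -> G (phi x) = h x.

Definition positions G t h :=
  [set phi t | phi in [set phi | U phi /\ matches G t h phi]].

Definition canon t h := wo_min (fun=> s0) [set G | positions G t h !=set0].

Definition lower_value (G : R -> S) (A : set R) : S :=
  if pselect (exists v, exists2 s, A s & forall s', A s' -> s' <= s -> G s' = v)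
  is left P then sval (cid P) else s0.

Definition anon_pred t h := lower_value (canon t h) (positions (canon t h) t h).

Lemma positions_ext G t h1 h2 : (forall x, I x -> x < t -> h1 x = h2 x) ->
  positions G t h1 = positions G t h2.
Proof.
move=> e; apply/seteqP; split => _ [psi [Upsi m] <-]; exists psi => //;
  split => // x Ix xt.
- by rewrite -e // (m x Ix xt).
- by rewrite e // (m x Ix xt).
Qed.

Lemma positions_reparam G phi t s h : U phi -> I t -> I s -> phi s = t ->
  positions G t h = positions G s (h \o phi).
Proof.
move=> Uphi It Is e; have Ui := sg_finv HU Uphi.
have phi_lt x : I x -> x < s -> phi x < t.
  by move=> Ix xs; rewrite -e (sg_ltE HU Uphi Ix Is).
have finv_lt x : I x -> x < t -> finv phi x < s.
  move=> Ix xt; rewrite -(sg_ltE HU Uphi (sg_ointv HU Ui Ix) Is).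
  by rewrite (sg_finvKV HU Uphi) e.
apply/seteqP; split => _ [psi [Upsi m] <-].
- exists (psi \o phi); last by rewrite /= e.
  split => [|x Ix xs]; first exact: (sg_comp HU Upsi Uphi).
  exact: (m _ (sg_ointv HU Uphi Ix) (phi_lt x Ix xs)).
- exists (psi \o finv phi); last by rewrite /= -e (sg_finvK HU Uphi).
  split => [|x Ix xt]; first exact: (sg_comp HU Upsi Ui).
  by rewrite /= (m _ (sg_ointv HU Ui Ix) (finv_lt x Ix xt)) /= (sg_finvKV HU Uphi).
Qed.

Lemma anon_pred_predictor : predictor a b anon_pred.
Proof.
move=> t h1 h2 It e.
have posE G : positions G t h1 = positions G t h2.
  by apply: positions_ext => x /andP[ax _]; exact: e.
have canonE : canon t h1 = canon t h2.
  by rewrite /canon; congr wo_min; apply/funext => G /=; rewrite posE.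
by rewrite /anon_pred canonE posE.
Qed.

Lemma anon_pred_anonymous : anonymous a b U anon_pred.
Proof.
move=> phi t s h Uphi It Is e.
have posE G := positions_reparam G h Uphi It Is e.
have canonE : canon t h = canon s (h \o phi).
  by rewrite /canon; congr wo_min; apply/funext => G /=; rewrite posE.
by rewrite /anon_pred canonE posE.
Qed.

Lemma canonP t h : positions (canon t h) t h !=set0 /\
  forall G, positions G t h !=set0 -> wo (canon t h) G.
Proof. by apply: wo_minP; exists h, t, id => //; split; [exact: sg_id HU|]. Qed.

Lemma canon_mono F t t' : t <= t' -> wo (canon t F) (canon t' F).
Proof.
move=> tt'; apply: (canonP t F).2.
have [[_ [phi [Uphi m] _]] _] := canonP t' F.
exists (phi t), phi => //; split => // x Ix xt.
by apply: m => //; exact: lt_le_trans xt tt'.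
Qed.

Definition canon_jumps F :=
  [set t | I t /\ forall t', I t' -> t < t' -> canon t' F <> canon t F].

Lemma canon_jumps_gap F t :
  exists u, t < u /\ forall j, canon_jumps F j -> t < j -> u <= j.
Proof.
have [[j0 [Mj0 tj0]]|none] := pselect (exists j, canon_jumps F j /\ t < j); last first.
  exists (t + 1); split => [|j Mj tj]; first by rewrite ltrDl ltr01.
  by case: none; exists j.
set A := [set G | exists j, [/\ canon_jumps F j, t < j & G = canon j F]].
have neA : A !=set0 by exists (canon j0 F), j0.
have [[js [Mjs tjs ->]] js_min] := wo_minP (fun=> s0) neA.
exists js; split => // j [Ij jump] tj; rewrite leNgt; apply/negP => jjs.
have [Ijs _] := Mjs.
apply: (jump js Ijs jjs); apply: wo_anti; last exact: canon_mono (ltW jjs).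
by apply: js_min; exists j.
Qed.

Lemma canon_jumps_countable F : countable (canon_jumps F).
Proof.
have [u uP] := choice (canon_jumps_gap F).
apply: (@separated_open_countable R R (fun t => `]t, u t[%classic)).
- by move=> t; exact: itv_open.
- move=> t; exists ((t + u t) / 2) => /=.
  by rewrite in_itv /= !midf_lt //; exact: (uP t).1.
move=> i j Mi Mj [z [/=]]; rewrite !in_itv /= => /andP[zi1 zi2] /andP[zj1 zj2].
case: (ltgtP i j) => // ij; exfalso.
- by have := (uP i).2 j Mj ij; rewrite leNgt (lt_trans zj1 zi2).
- by have := (uP j).2 i Mi ij; rewrite leNgt (lt_trans zi1 zj2).
Qed.

Lemma lower_value_spec (G : R -> S) (A : set R) s : A s -> lower_value G A <> G s ->
  exists z, [/\ A z, z < s & G z <> G s].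
Proof.
move=> As; rewrite /lower_value; case: pselect => [P|noP] err.
- case: (cid P) err => v [s1 As1 Gv] /= err.
  have [s_le|s1_lt] := leP s s1; first by case: err; rewrite -(Gv _ As s_le).
  by exists s1; split => //; rewrite (Gv _ As1 (lexx _)).
- apply: contrapT => noz; apply: noP; exists (G s), s => // s' As' s's.
  apply: contrapT => neq; apply: noz; exists s'; split => //.
  by rewrite lt_neqAle s's andbT; apply/eqP => ss'; apply: neq; rewrite ss'.
Qed.

Lemma mispredict_break F t T phi : I t -> t < T -> U phi ->
  matches (canon t F) T F phi -> anon_pred t F <> F t ->
  break_points a b U (canon t F \o phi) t.
Proof.
move=> It tT Uphi m err; set G := canon t F.
have m_t : matches G t F phi.
  by move=> x Ix xt; apply: m => //; exact: lt_trans xt tT.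
have pos_t : positions G t F (phi t) by exists phi.
have [_ [[psi [Upsi mpsi] <-] psi_lt Gneq]] :
    exists z, [/\ positions G t F z, z < phi t & G z <> G (phi t)].
  have Gt : G (phi t) = F t := m _ It tT.
  by apply: lower_value_spec pos_t _; rewrite Gt.
have Ui := sg_finv HU Uphi; have Ipsi := sg_ointv HU Upsi It.
split => //; exists (finv phi \o psi); split; first exact: (sg_comp HU Ui Upsi).
  by rewrite /= -(sg_ltE HU Uphi (sg_ointv HU Ui Ipsi) It) (sg_finvKV HU Uphi).
split => [x Ix xt|] /=; rewrite (sg_finvKV HU Uphi) //.
by rewrite (mpsi _ Ix xt) (m_t _ Ix xt).
Qed.

Lemma mispredictions_sub F (phi : rat -> R -> R) :
  (forall q, I (ratr q) -> U (phi q) /\ matches (canon (ratr q) F) (ratr q) F (phi q)) ->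
  [set t | I t /\ anon_pred t F <> F t] `<=`
    canon_jumps F `|` \bigcup_q break_points a b U (canon (ratr q) F \o phi q).
Proof.
move=> phiP t [It err]; have [jump|no_jump] := pselect (canon_jumps F t); first by left.
have [t' [It' tt' canonE]] : exists t', [/\ I t', t < t' & canon t' F = canon t F].
  apply: contrapT => none; apply: no_jump; split => // t' It' tt' canonE.
  by apply: none; exists t'.
have [q] := rat_in_itvoo tt'; rewrite in_itv /= => /andP[tq qt'].
have Iq : I (ratr q) := ointv_convex It It' (ltW tq) (ltW qt').
have canon_q : canon (ratr q) F = canon t F.
  apply: wo_anti; last exact: canon_mono (ltW tq).
  by rewrite -canonE; exact: canon_mono (ltW qt').
have [Uphi m] := phiP q Iq; rewrite canon_q in m.
by right; exists q => //; rewrite canon_q; exact: (mispredict_break It tq Uphi m err).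
Qed.

Hypothesis comm_free : forall g, commutator_subgroup a b U g -> g <> id ->
  forall x, I x -> g x <> x.

Lemma anon_pred_good : good_predictor a b anon_pred.
Proof.
move=> F.
have [phi phiP] : {phi : rat -> R -> R & forall q, I (ratr q) ->
    U (phi q) /\ matches (canon (ratr q) F) (ratr q) F (phi q)}.
  apply: (@choice _ _ (fun q psi => I (ratr q) ->
    U psi /\ matches (canon (ratr q) F) (ratr q) F psi)) => q.
  have [Iq|nIq] := pselect (I (ratr q)); last by exists id => /nIq.
  by have [[_ [psi Ppsi _]] _] := canonP (ratr q) F; exists psi.
apply: (@negligibleS _ _ _ (@lebesgue_measure R) _ _ (mispredictions_sub phiP)).
apply: negligibleU; first exact/countable_negligible/canon_jumps_countable.
apply/countable_negligible/bigcup_countable => // q _.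
exact: break_points_countable.
Qed.

End Predictor.

Theorem theorem1p5 (R : realType) (a b : \bar R) (U : set (R -> R)) :
  (a < b)%E ->
  homeo_subgroup a b U ->
  (forall g, commutator_subgroup a b U g -> g <> id ->
     forall x, ointv a b x -> g x <> x) ->
  (forall f, U f -> f <> id ->
     forall s t, ointv a b s -> ointv a b t -> f s = s -> f t = t -> s = t) ->
  forall (S : Type), inhabited S ->
    exists P : R -> (R -> S) -> S,
      [/\ predictor a b P, good_predictor a b P & anonymous a b U P].
Proof.
move=> _ HU comm_free _ S [s0].
exists (anon_pred a b U s0); split.
- exact: anon_pred_predictor.
- exact: anon_pred_good.
- exact: anon_pred_anonymous.
Qed.
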